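(* Let $T$ be a tree with leaves $1,\dots,n$ in which every non-leaf node has degree $3$, and let $i,j$ be two leaves of $T$. Let $\alpha,\beta\in[-1,1]^{\binom n2}$ satisfy $\alpha_{kl}=\beta_{kl}$ for all pairs $(k,l)\neq(i,j)$. Define $\gamma\in[-1,1]^{\binom n2}$ by $\gamma_{kl}=0$ if the paths $P_{ij}$ and $P_{kl}$ have a common edge, and $\gamma_{kl}=\alpha_{kl}$ otherwise. Then for every $x\in\{-1,1\}^n$, $$f_x^T(\alpha)-f_x^T(\beta) = x_ix_j(\alpha_{ij}-\beta_{ij})\, f_x^{T\setminus\{i,j\}}(\gamma).$$
   Context: $P_{kl}$ denotes the path between nodes $k,l$. For a forest $F$ whose set of labeled leaves is $\{1,\dots,n\}$ and an even-cardinality subset $S\subseteq[n]$, a closest relative matching of $S$ in $F$ is a partition of $S$ into pairs such that each pair lies in a common connected component of $F$ and the paths (in $F$) joining distinct pairs are edge-disjoint; when it exists it is unique. For $\alpha\in[-1,1]^{\binom n2}$ let $\alpha^F_S=\prod_{(a,b)}\alpha_{ab}$ over the pairs of this matching (and $\alpha^F_\emptyset=1$). Define $f_x^F(\alpha)=2^{-n}\sum_{S}\alpha^F_S\prod_{k\in S}x_k$, the sum over even subsets $S\subseteq[n]$ admitting a closest relative matching in $F$ (for a tree $F$ this is every even subset). For a tree this is defined for arbitrary $\alpha$, and when $\alpha$ is the vector of leaf correlations of a tree Ising model on $T$, $f_x^T(\alpha)$ is the probability of leaf configuration $x$. $T\setminus\{i,j\}$ denotes the forest obtained from $T$ by removing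 all edges of the path $P_{ij}$ (keeping all nodes, with the same leaf labels). *)

From mathcomp Require Import all_boot all_order all_algebra.
From mathcomp Require Import boolp.
Set Implicit Arguments. Unset Strict Implicit. Unset Printing Implicit Defensive.
Import Order.TTheory GRing.Theory Num.Theory.
Local Open Scope ring_scope.

Section Graphs.
Variable V : finType.

(* A (simple) graph on V is a symmetric irreflexive relation e : rel V.  *)

Definition walk_edges (a : V) (p : seq V) : seq {set V} :=
  [seq [set x.1; x.2] | x <- zip (a :: p) p].

(* E is an edge of a simple path (no repeated vertex) from a to b in e.
   In a forest such a path is unique, so this is "E is an edge of P_ab". *)
Definition on_path (e : rel V) (a b : V) (E : {set V}) : Prop :=
  exists p : seq V,
    [/\ path e a p, last a p = b, uniq (a :: p) & E \in walk_edges a p].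

Definition share_edge (e : rel V) (a b c d : V) : Prop :=
  exists E : {set V}, on_path e a b E /\ on_path e c d E.

Definition is_tree (e : rel V) : Prop :=
  [/\ symmetric e, irreflexive e, (forall u v, connect e u v) &
      ~ (exists p : seq V, [/\ uniq p, (2 < size p)%N & cycle e p])].

Definition degree (e : rel V) (v : V) : nat := #|[set u | e v u]|.

(* T \ {a,b}: remove all edges of the path P_ab, keep all nodes. *)
Definition remove_path (e : rel V) (a b : V) : rel V :=
  fun u v => e u v && ~~ `[< on_path e a b [set u; v] >].

Variable n : nat.
Variable leaf : 'I_n -> V.

Definition crm (e : rel V) (S : {set 'I_n}) (M : {set {set 'I_n}}) : Prop :=
  [/\ partition M S,
      (forall B, B \in M -> #|B| = 2%N),
      (forall B, B \in M -> forall k l, k \in B -> l \in B -> connect e (leaf k) (leaf l)) &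
      (forall B C, B \in M -> C \in M -> B != C -> forall k l k' l',
          B = [set k; l] -> C = [set k'; l'] ->
          ~ share_edge e (leaf k) (leaf l) (leaf k') (leaf l'))].

Variable R : realFieldType.

(* alpha^F_S : product of alpha over the pairs of the (unique) matching. *)
Definition alphaF (e : rel V) (alpha : {set 'I_n} -> R) (S : {set 'I_n}) : R :=
  if [pick M | `[< crm e S M >]] is Some M then \prod_(B in M) alpha B else 0.

Definition fx (e : rel V) (x : 'I_n -> R) (alpha : {set 'I_n} -> R) : R :=
  (2%:R ^+ n)^-1 *
  \sum_(S : {set 'I_n} | ~~ odd #|S| && `[< exists M, crm e S M >])
     alphaF e alpha S * \prod_(k in S) x k.

Definition gammaV (e : rel V) (i j : 'I_n) (alpha : {set 'I_n} -> R)
  : {set 'I_n} -> R :=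
  fun B => if `[< exists k l, B = [set k; l] /\
                  share_edge e (leaf i) (leaf j) (leaf k) (leaf l) >]
           then 0 else alpha B.

End Graphs.

From mathcomp Require Import all_boot all_order all_algebra.
From mathcomp Require Import boolp.
From mathcomp Require Import ring.
Import Order.TTheory GRing.Theory Num.Theory.
Set Implicit Arguments. Unset Strict Implicit. Unset Printing Implicit Defensive.

(** The identity is proved summand by summand.  Write [M_S] for the closest relative
    matching of [S] in [T].  If [{i,j}] is not a block of [M_S], the summands of
    [f^T(alpha)] and [f^T(beta)] coincide.  If it is, then removing the path
    [P_ij] isolates the leaves [i] and [j], and [M_S \ {i,j}] is the closest
    relative matching of [S \ {i,j}] in [T \ {i,j}]; conversely a matching in
    [T \ {i,j}] extends by the block [{i,j}].  The remaining summands are thus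
    those of the right-hand side, with [gamma = alpha] on the blocks involved.

    The substance is the uniqueness of closest relative matchings.  An edge [uv]
    lies on the path of a block iff the block has an odd number of leaves on
    the [v] side of [uv]; since the paths of a matching are edge-disjoint, [uv]
    is covered by some block of a matching of [S] iff [S] has an odd number of
    leaves on that side, which does not depend on the matching.  If a leaf [k]
    were matched to [l1] in one matching and to [l2] in another, let [w] be the
    vertex where [P_k,l1] and [P_k,l2] branch and [wy] the first edge of the
    branch towards [l2].  Some block of the first matching other than [{k,l1}]
    covers [wy]; its path passes through the inner vertex [w], so it uses a
    second edge at [w], which by degree 3 lies on [P_k,l1], contradicting
    edge-disjointness. *)

Section Sequences.
Variable T : eqType.
Implicit Types (r : rel T) (a b c d u v w : T) (p q s t : seq T).

Lemma path_zipE r a p : path r a p = all [pred cd | r cd.1 cd.2] (zip (a :: p) p).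
Proof. by elim: p a => //= b p IH a; rewrite IH. Qed.

Lemma zip_step_split a p c d : (c, d) \in zip (a :: p) p ->
  exists s1 s2, a :: p = s1 ++ c :: d :: s2.
Proof.
elim: p a => [|b p IH] a //=.
rewrite in_cons => /orP [/eqP [-> ->]|/IH [s1 [s2 E]]]; first by exists [::], p.
by exists (a :: s1), s2; rewrite E.
Qed.

Lemma split_zip_step s1 s2 a p c d : a :: p = s1 ++ c :: d :: s2 ->
  (c, d) \in zip (a :: p) p.
Proof.
elim: s1 a p => [|x s1 IH] a p /=; first by case=> -> ->; rewrite mem_head.
case=> _; case: p => [|b q] Ep; first by case: (s1) Ep.
by rewrite /= in_cons (IH _ _ Ep) orbT.
Qed.

Lemma path_split_step r a p s1 c d s2 :
  path r a p -> a :: p = s1 ++ c :: d :: s2 -> r c d.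
Proof. by rewrite path_zipE => /allP pp /split_zip_step /pp. Qed.

Lemma path_split_at r a p s1 c s2 : path r a p -> a :: p = s1 ++ c :: s2 ->
  path r c s2 /\ exists2 q, a :: q = rcons s1 c & path r a q.
Proof.
elim: s1 a p => [|x s1 IH] a p /=; first by move=> pp [<- <-]; split; last exists [::].
case: p => [|b p] pp [<- Ep]; first by case: (s1) Ep.
case/andP: pp => rab /IH /(_ Ep) [ps2 [q Eq pq]]; split => //.
by exists (b :: q); rewrite /= -?Eq ?rab.
Qed.

Lemma uniq_path_inner r a p s1 u w v s2 :
  path r a p -> uniq (a :: p) -> a :: p = s1 ++ u :: w :: v :: s2 ->
  [/\ r u w, r w v & u != v].
Proof.
move=> pp up Es; split.
- exact: path_split_step pp Es.
- by apply: (path_split_step (s1 := rcons s1 u) pp); rewrite cat_rcons Es.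
move: up; rewrite Es cat_uniq => /and3P [_ _ /andP [+ _]].
by apply: contraNneq => ->; rewrite !inE eqxx orbT.
Qed.

Lemma uniq_cat_eq s t1 t2 c s1 s2 : uniq s ->
  s = t1 ++ c :: s1 -> s = t2 ++ c :: s2 -> t1 = t2 /\ s1 = s2.
Proof.
move=> us E1 E2.
have index_c t s' : s = t ++ c :: s' -> index c s = size t.
  move=> E; move: us; rewrite E cat_uniq index_cat => /and3P [_ + _].
  by case: ifP => [ct /hasP []|]; [exists c; rewrite ?mem_head | rewrite /= eqxx addn0].
have sz := index_c _ _ E1; rewrite (index_c _ _ E2) in sz.
by move: E2; rewrite E1 => /eqP; rewrite eqseq_cat // => /andP [/eqP -> /eqP [->]].
Qed.

Lemma cons_rcons_cat a s w t :
  a :: (rcons s w ++ t) = belast a s ++ last a s :: w :: t.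
Proof. by rewrite cat_rcons -cat_cons lastI cat_rcons. Qed.

Lemma common_prefix_cases p1 p2 :
  [\/ p1 = p2, exists y t, p2 = p1 ++ y :: t, exists y t, p1 = p2 ++ y :: t |
      exists s x y t1 t2, [/\ x != y, p1 = s ++ x :: t1 & p2 = s ++ y :: t2]].
Proof.
elim: p1 p2 => [|x p1 IH] [|y p2].
- by constructor 1.
- by constructor 2; exists y, p2.
- by constructor 3; exists x, p1.
case: (eqVneq x y) => [<-|nxy]; last by constructor 4; exists [::], x, y, p1, p2.
case: (IH p2) => [->|[z [t ->]]|[z [t ->]]|[s [x' [y' [t1 [t2 [nx -> ->]]]]]]].
- by constructor 1.
- by constructor 2; exists z, t.
- by constructor 3; exists z, t.
by constructor 4; exists (x :: s), x', y', t1, t2.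
Qed.

End Sequences.

Lemma set2_eq_cases (T : finType) (a b c d : T) : [set a; b] = [set c; d] ->
  (a = c /\ b = d) \/ (a = d /\ b = c).
Proof.
move=> E.
have ha : (a == c) || (a == d) by rewrite -in_set2 -E set21.
have hb : (b == c) || (b == d) by rewrite -in_set2 -E set22.
have hc : (c == a) || (c == b) by rewrite -in_set2 E set21.
have hd : (d == a) || (d == b) by rewrite -in_set2 E set22.
by case/orP: ha => /eqP ?; case/orP: hb => /eqP ?; subst;
  case/orP: hc => /eqP ?; case/orP: hd => /eqP ?; subst; auto.
Qed.

Lemma setDUK (T : finType) (A B : {set T}) : A \subset B -> B :\: A :|: A = B.
Proof. by move=> AB; rewrite setUC -{2}(setID B A) (setIidPr AB). Qed.

Lemma setUDK (T : finType) (A B : {set T}) : [disjoint A & B] -> (A :|: B) :\: B = A.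
Proof. by move=> dAB; rewrite setDUl setDv setU0; apply/setDidPl. Qed.

Section Walks.
Variable V : finType.
Implicit Types (r : rel V) (a b c d : V) (p : seq V) (E : {set V}).

Lemma walk_edges_split a p E : E \in walk_edges a p ->
  exists s1 c d s2, a :: p = s1 ++ c :: d :: s2 /\ E = [set c; d].
Proof. by case/mapP => -[c d] /zip_step_split [s1 [s2 Es]] ->; exists s1, c, d, s2. Qed.

Lemma split_walk_edges a p s1 c d s2 : a :: p = s1 ++ c :: d :: s2 ->
  [set c; d] \in walk_edges a p.
Proof. by move=> Es; apply/mapP; exists (c, d) => //; apply: split_zip_step Es. Qed.

Lemma walk_edges_endpoint a p c d : [set c; d] \in walk_edges a p -> d \in a :: p.
Proof.
case/walk_edges_split => s1 [x [y [s2 [-> /set2_eq_cases]]]].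
by case=> -[_ ->]; rewrite mem_cat !inE eqxx ?orbT.
Qed.

Lemma path_walk_edges r a p E : path r a p -> E \in walk_edges a p ->
  exists c d, E = [set c; d] /\ r c d.
Proof.
move=> pp /walk_edges_split [s1 [c [d [s2 [Es ->]]]]].
by exists c, d; split; last exact: path_split_step pp Es.
Qed.

Lemma on_path_edge r a b E : on_path r a b E -> exists c d, E = [set c; d] /\ r c d.
Proof. by case=> p [pp _ _]; apply: path_walk_edges pp. Qed.

Lemma on_path_subrel r r' a b E : subrel r r' -> on_path r a b E -> on_path r' a b E.
Proof. by move=> sr [p [pp lp up Ep]]; exists p; split => //; apply: sub_path pp. Qed.

Lemma connect_simple_path r a b : connect r a b ->
  exists p, [/\ path r a p, last a p = b & uniq (a :: p)].
Proof. by case/connectP => p /shortenP [p' pp' up' _] ->; exists p'. Qed.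

Lemma uniq_walk_edge_at a p s1 w s2 y : uniq (a :: p) -> a :: p = s1 ++ w :: s2 ->
  [set w; y] \in walk_edges a p ->
  (exists s0, s1 = rcons s0 y) \/ (exists s3, s2 = y :: s3).
Proof.
move=> up Es /walk_edges_split [t1 [c [d [t2 [Et]]]]].
case/set2_eq_cases => -[? ?]; subst.
  by right; exists t2; have [_ <-] := uniq_cat_eq up Es Et.
by left; exists t1; rewrite -cat_rcons in Et; have [<- _] := uniq_cat_eq up Es Et.
Qed.

Lemma remove_pathP r a b c d :
  reflect (r c d /\ ~ on_path r a b [set c; d]) (remove_path r a b c d).
Proof. by apply: (iffP andP) => -[rcd /asboolPn]. Qed.

Lemma path_remove_path r a b c p : path r c p ->
  (forall E, E \in walk_edges c p -> ~ on_path r a b E) ->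
  path (remove_path r a b) c p.
Proof.
rewrite !path_zipE => /allP pp off; apply/allP => -[x y] xy; apply/remove_pathP.
by split; [apply: (pp _ xy) | apply: off; apply/mapP; exists (x, y)].
Qed.

Lemma remove_path_sub r a b : subrel (remove_path r a b) r.
Proof. by move=> c d /remove_pathP []. Qed.

End Walks.

Section Matchings.
Variables (V : finType) (n : nat) (leaf : 'I_n -> V).
Implicit Types (r : rel V) (S B : {set 'I_n}) (M : {set {set 'I_n}}).

Lemma crm_pair r S M B : crm leaf r S M -> B \in M ->
  exists k l, k != l /\ B = [set k; l].
Proof. by case=> _ c2 _ _ BM; apply/cards2P; rewrite c2. Qed.

Lemma crm_pair_with r S M B k : crm leaf r S M -> B \in M -> k \in B ->
  exists2 l, k != l & B = [set k; l].
Proof.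
move=> C BM; have [a [b [nab ->]]] := crm_pair C BM.
by rewrite !inE => /orP [] /eqP ->; [exists b | exists a; rewrite 1?eq_sym 1?setUC].
Qed.

Lemma crm_connect r S M k l : crm leaf r S M -> [set k; l] \in M ->
  connect r (leaf k) (leaf l).
Proof. by case=> _ _ conn _ klM; apply: conn klM _ _ (set21 k l) (set22 k l). Qed.

Lemma crm_even r S M : crm leaf r S M -> ~~ odd #|S|.
Proof.
case=> pM c2 _ _; rewrite (card_partition pM) (eq_bigr (fun _ => 2%N) c2).
by rewrite sum_nat_const oddM andbF.
Qed.

Lemma alphaF_crm (R : realFieldType) r (alpha : {set 'I_n} -> R) S M :
  (forall M', crm leaf r S M' -> M' = M) -> crm leaf r S M ->
  alphaF leaf r alpha S = (\prod_(B in M) alpha B)%R.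
Proof.
move=> Muniq C; rewrite /alphaF; case: pickP => [M' /asboolP /Muniq -> // | none].
by move: (none M); rewrite asboolT.
Qed.

End Matchings.

Section Parity.
Variable T : finType.
Implicit Types (A S Z : {set T}) (M : {set {set T}}).

Lemma card_setI_sum A Z : #|A :&: Z| = \sum_(m in A) (m \in Z).
Proof.
rewrite -sum1_card big_mkcond [RHS]big_mkcond; apply: eq_bigr => m _.
by rewrite inE; case: (m \in A); case: (m \in Z).
Qed.

Lemma odd_card_partition M S Z : partition M S ->
  odd #|S :&: Z| = odd (\sum_(B in M) odd #|B :&: Z|).
Proof.
case/and3P => /eqP <- tM _; rewrite card_setI_sum big_trivIset //.
apply: (big_ind2 (fun a b => odd a = odd b)) => // [x1 x2 y1 y2 e1 e2|B _].
  by rewrite !oddD e1 e2.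
by rewrite oddb card_setI_sum.
Qed.

End Parity.

(** * Sides of a tree edge *)

Section Tree.
Variable V : finType.
Variable e : rel V.
Hypothesis e_sym : symmetric e.
Hypothesis e_irr : irreflexive e.
Hypothesis e_conn : forall u v, connect e u v.
Hypothesis e_acyclic : ~ (exists p : seq V, [/\ uniq p, (2 < size p)%N & cycle e p]).
Implicit Types (a b c d u v w x y z : V) (p q : seq V) (E : {set V}).

Definition del_edge E : rel V := fun c d => e c d && ([set c; d] != E).

Definition side u v : pred V := connect (del_edge [set u; v]) v.

Lemma del_edge_sym E : symmetric (del_edge E).
Proof. by move=> c d; rewrite /del_edge e_sym setUC. Qed.

Lemma side_sep u v : e u v -> ~~ side u v u.
Proof.
move=> euv; apply/negP => /connect_simple_path [q [pq lq uq]].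
apply: e_acyclic; exists (v :: q); split => //.
  case: q pq lq uq => [|w [|w' q]] //=.
    by move=> _ vu; move: euv; rewrite vu e_irr.
  by move=> /andP [/andP [_ +] _] wu; rewrite wu setUC eqxx.
rewrite /= rcons_path lq euv andbT.
by apply: sub_path pq => c d /andP [].
Qed.

Lemma side_edge u v c d : e u v -> [set c; d] = [set u; v] ->
  side u v c != side u v d.
Proof.
move=> euv /set2_eq_cases [[-> ->]|[-> ->]];
  by rewrite (negbTE (side_sep euv)) /side connect0.
Qed.

Lemma path_del_edge a p E : path e a p -> E \notin walk_edges a p ->
  path (del_edge E) a p.
Proof.
rewrite !path_zipE => /allP pp nE; apply/allP => -[c d] cd /=.
rewrite /del_edge (pp _ cd : e c d) /=; apply: contraNneq nE => <-.
by apply/mapP; exists (c, d).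
Qed.

Lemma connect_del_edge_avoid a p c d : path e a p -> d \notin a :: p ->
  connect (del_edge [set c; d]) a (last a p).
Proof.
move=> pp nd; apply/connectP; exists p => //; apply: path_del_edge pp _.
exact: contra (@walk_edges_endpoint _ a p c d) nd.
Qed.

Lemma mem_walk_edges_side u v a p : e u v -> path e a p -> uniq (a :: p) ->
  ([set u; v] \in walk_edges a p) = (side u v a != side u v (last a p)).
Proof.
move=> euv pp up.
have cs : connect_sym (del_edge [set u; v]) := sym_connect_sym (del_edge_sym _).
apply/idP/idP; last first.
  apply: contraR => nE; apply/eqP.
  have cap : connect (del_edge [set u; v]) a (last a p).
    by apply/connectP; exists p => //; apply: path_del_edge.
  exact: (same_connect_r cs cap v).
case/walk_edges_split => s1 [c [d [s2 [Es Ecd]]]].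
have [ps2 [q Eq pq]] := path_split_at pp Es.
move: up; rewrite Es cat_uniq => /and3P [_ /hasPn ns1 /andP [nc /andP [nd _]]].
have ac : connect (del_edge [set u; v]) a c.
  rewrite -[c](last_rcons a s1) -Eq Ecd; apply: connect_del_edge_avoid pq _.
  rewrite Eq mem_rcons !inE negb_or; apply/andP; split.
    by apply: contraNneq nc => <-; rewrite mem_head.
  by apply: ns1; rewrite !inE eqxx orbT.
have db : connect (del_edge [set u; v]) d (last a p).
  rewrite -[last a p]/(last a (a :: p)) Es last_cat /= Ecd setUC.
  by apply: connect_del_edge_avoid => //; case/andP: ps2.
rewrite /side (same_connect_r cs ac v) -(same_connect_r cs db v).
exact: side_edge euv (esym Ecd).
Qed.

Lemma on_path_side u v a b : e u v ->
  on_path e a b [set u; v] <-> side u v a != side u v b.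
Proof.
move=> euv; split; first by case=> p [pp <- up]; rewrite -mem_walk_edges_side.
move=> sab; have [p [pp lp up]] := connect_simple_path (e_conn a b).
by exists p; split => //; rewrite mem_walk_edges_side // lp.
Qed.

Lemma on_path_simple a b E p : on_path e a b E ->
  path e a p -> last a p = b -> uniq (a :: p) -> E \in walk_edges a p.
Proof.
move=> op pp lp up; have [u [v [EE euv]]] := on_path_edge op.
by move: op; rewrite EE on_path_side // mem_walk_edges_side // lp.
Qed.

Lemma on_path_sym a b E : on_path e a b E -> on_path e b a E.
Proof.
move=> op; have [u [v [EE euv]]] := on_path_edge op.
by move: op; rewrite EE !on_path_side // eq_sym.
Qed.

Lemma on_path_restrict r a b E : subrel r e ->
  on_path e a b E -> connect r a b -> on_path r a b E.
Proof.
move=> sr op /connect_simple_path [p [pp lp up]]; exists p; split => //.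
by apply: on_path_simple op _ lp up; apply: sub_path pp.
Qed.

Lemma on_path_adj a b c d : on_path e a b [set c; d] -> e c d.
Proof.
by case/on_path_edge => x [y [/set2_eq_cases [[-> ->]|[-> ->]] //]]; rewrite e_sym.
Qed.

Lemma on_path_through a b w y : w != a -> w != b ->
  on_path e a b [set w; y] -> exists2 d, d != y & on_path e a b [set w; d].
Proof.
move=> wa wb [p [pp lp up /walk_edges_split [s1 [c [d [s2 [Es Ecd]]]]]]].
case/set2_eq_cases: Ecd => -[? ?]; subst c d.
  case/lastP: s1 Es => [[aw]|s0 d Es]; first by rewrite aw eqxx in wa.
  rewrite cat_rcons in Es; have [_ _ ndy] := uniq_path_inner pp up Es.
  by exists d => //; exists p; split => //; rewrite setUC; apply: split_walk_edges Es.
case: s2 Es => [|d s3] Es.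
  by move: wb; rewrite -lp -[last a p]/(last a (a :: p)) Es last_cat eqxx.
have [_ _ ndy] := uniq_path_inner pp up Es.
exists d; first by rewrite eq_sym.
exists p; split => //.
by apply: (split_walk_edges (s1 := rcons s1 y)); rewrite cat_rcons Es.
Qed.

(** * Uniqueness of closest relative matchings *)

Variables (n : nat) (leaf : 'I_n -> V).
Hypothesis leaf_inj : injective leaf.
Hypothesis leaf_deg1 : forall v, (degree e v == 1%N) = (v \in codom leaf).
Hypothesis inner_deg3 : forall v, v \notin codom leaf -> degree e v = 3%N.

Lemma leaf_neighbor_uniq v c d : v \in codom leaf -> e v c -> e v d -> c = d.
Proof.
rewrite -leaf_deg1 /degree => /cards1P [z Ez] evc evd.
have nb_z x : e v x -> x = z by move=> evx; apply/set1P; rewrite -Ez inE.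
by rewrite (nb_z _ evc) (nb_z _ evd).
Qed.

Lemma inner_neighbor_cases w x y z d : w \notin codom leaf ->
  e w x -> e w y -> e w z -> uniq [:: x; y; z] -> e w d -> d \in [:: x; y; z].
Proof.
move=> wn ex ey ez uxyz ed.
have sub : {subset [:: x; y; z] <= enum [set u | e w u]}.
  by move=> u; rewrite mem_enum inE !inE => /or3P [] /eqP ->.
have size3 : size (enum [set u | e w u]) <= size [:: x; y; z].
  by rewrite -cardE -/(degree e w) inner_deg3.
have [_ eq_s] := uniq_min_size uxyz sub size3.
by rewrite eq_s mem_enum inE.
Qed.

Lemma leaf_not_inner a p s1 u w v s2 : path e a p -> uniq (a :: p) ->
  a :: p = s1 ++ u :: w :: v :: s2 -> w \notin codom leaf.
Proof.
move=> pp up Es; have [euw ewv nuv] := uniq_path_inner pp up Es.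
apply: contraNN nuv => wl; apply/eqP; apply: leaf_neighbor_uniq wl _ ewv.
by rewrite e_sym.
Qed.

Lemma prefix_end_not_leaf a p q y t : path e a q -> uniq (a :: q) ->
  q = p ++ y :: t -> p != [::] -> last a p \notin codom leaf.
Proof.
move=> pq uq Eq; case/lastP: p Eq => // p0 b Eq _; rewrite last_rcons.
by apply: (leaf_not_inner pq uq); rewrite Eq; apply: cons_rcons_cat.
Qed.

Lemma simple_paths_branch a p1 p2 s z w x y t1 t2 :
  path e a p1 -> uniq (a :: p1) -> path e a p2 -> uniq (a :: p2) ->
  a :: p1 = s ++ z :: w :: x :: t1 -> a :: p2 = s ++ z :: w :: y :: t2 -> x != y ->
  [/\ w \notin codom leaf, [set w; y] \in walk_edges a p2,
      [set w; y] \notin walk_edges a p1 &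
      forall d, e w d -> d != y -> [set w; d] \in walk_edges a p1].
Proof.
move=> pp1 up1 pp2 up2 E1 E2 nxy.
have [ezw ewx nzx] := uniq_path_inner pp1 up1 E1.
have [_ ewy nzy] := uniq_path_inner pp2 up2 E2.
have wn := leaf_not_inner pp1 up1 E1.
have E1' : a :: p1 = rcons s z ++ w :: x :: t1 by rewrite cat_rcons.
split=> //.
- by apply: (split_walk_edges (s1 := rcons s z)); rewrite cat_rcons E2.
- apply/negP => /(uniq_walk_edge_at up1 E1') [[s0 /rcons_inj [_ zy]]|[t [xy _]]].
    by rewrite zy eqxx in nzy.
  by rewrite xy eqxx in nxy.
move=> d ewd ndy.
have uzxy : uniq [:: z; x; y] by rewrite /= !inE negb_or nzx nzy nxy.
have ewz : e w z by rewrite e_sym.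
have := inner_neighbor_cases wn ewz ewx ewy uzxy ewd.
rewrite !inE => /or3P [] /eqP ?; subst d.
- by rewrite setUC; apply: split_walk_edges E1.
- exact: split_walk_edges E1'.
- by rewrite eqxx in ndy.
Qed.

Lemma leaf_path_branch k l1 l2 : k != l1 -> k != l2 -> l1 != l2 ->
  exists w y, [/\ w \notin codom leaf, on_path e (leaf k) (leaf l2) [set w; y],
    ~ on_path e (leaf k) (leaf l1) [set w; y] &
    forall d, e w d -> d != y -> on_path e (leaf k) (leaf l1) [set w; d]].
Proof.
move=> nk1 nk2 n12.
have [p1 [pp1 lp1 up1]] := connect_simple_path (e_conn (leaf k) (leaf l1)).
have [p2 [pp2 lp2 up2]] := connect_simple_path (e_conn (leaf k) (leaf l2)).
have nonempty l p : k != l -> last (leaf k) p = leaf l -> p != [::].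
  by move=> nkl lp; apply: contraNneq nkl => p0; apply/eqP/leaf_inj; rewrite -lp p0.
case: (common_prefix_cases p1 p2) =>
  [E12|[y [t E]]|[y [t E]]|[s [x [y [t1 [t2 [nxy E1 E2]]]]]]].
- by move: n12; rewrite -(inj_eq leaf_inj) -lp1 -lp2 E12 eqxx.
- by move: (prefix_end_not_leaf pp2 up2 E (nonempty _ _ nk1 lp1)); rewrite lp1 codom_f.
- by move: (prefix_end_not_leaf pp1 up1 E (nonempty _ _ nk2 lp2)); rewrite lp2 codom_f.
case: (lastP s) E1 E2 => [|{}s w] E1 E2.
  move: pp1 pp2; rewrite E1 E2 => /andP [ex _] /andP [ey _].
  by rewrite (leaf_neighbor_uniq (codom_f leaf k) ex ey) eqxx in nxy.
have E1' : leaf k :: p1 = belast (leaf k) s ++ last (leaf k) s :: w :: x :: t1.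
  by rewrite E1 cons_rcons_cat.
have E2' : leaf k :: p2 = belast (leaf k) s ++ last (leaf k) s :: w :: y :: t2.
  by rewrite E2 cons_rcons_cat.
have [wn op2 nop1 op1] := simple_paths_branch pp1 up1 pp2 up2 E1' E2' nxy.
exists w, y; split => //; first by exists p2.
  by move/on_path_simple => /(_ _ pp1 lp1 up1); apply/negP.
by move=> d ewd ndy; exists p1; split => //; apply: op1.
Qed.

Lemma on_path_pair k l k' l' E : [set k; l] = [set k'; l'] ->
  on_path e (leaf k) (leaf l) E -> on_path e (leaf k') (leaf l') E.
Proof. by case/set2_eq_cases => -[-> ->] // /on_path_sym. Qed.

Lemma on_path_leaves_odd k l u v : k != l -> e u v ->
  on_path e (leaf k) (leaf l) [set u; v] <->
  odd #|[set k; l] :&: [set m | side u v (leaf m)]|.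
Proof.
move=> nkl euv; rewrite on_path_side // card_setI_sum big_setU1 ?inE // big_set1.
by rewrite oddD !oddb !inE; case: (side u v (leaf k)); case: (side u v (leaf l)).
Qed.

Lemma crm_cover_edge S M1 M2 k2 l2 E : crm leaf e S M1 -> crm leaf e S M2 ->
  [set k2; l2] \in M2 -> on_path e (leaf k2) (leaf l2) E ->
  exists k l, [set k; l] \in M1 /\ on_path e (leaf k) (leaf l) E.
Proof.
move=> C1 C2 B2 op; have [u [v [EE euv]]] := on_path_edge op; subst E.
set Z := [set m | side u v (leaf m)].
have crossing B : B \in M2 -> odd #|B :&: Z| = (B == [set k2; l2]).
  move=> BM; have [k [l [nkl EB]]] := crm_pair C2 BM.
  rewrite EB; apply/idP/eqP => [/(on_path_leaves_odd nkl euv) opB | E2].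
    case: (eqVneq [set k; l] [set k2; l2]) => // nB; case: C2 => _ _ _ disj.
    rewrite EB in BM; case: (disj _ _ BM B2 nB k l k2 l2 erefl erefl).
    by exists [set u; v].
  by apply/(on_path_leaves_odd nkl euv); apply: on_path_pair (esym E2) op.
have [pM1 _ _ _] := C1; have [pM2 _ _ _] := C2.
have oddS : odd #|S :&: Z|.
  rewrite (odd_card_partition _ pM2) (bigD1 _ B2) //= crossing // eqxx.
  by rewrite big1 // => B /andP [BM /negbTE nB]; rewrite crossing // nB.
have [B BM1 oB] : exists2 B, B \in M1 & odd #|B :&: Z|.
  apply/exists_inP; apply: contraLR oddS => /exists_inPn none.
  by rewrite (odd_card_partition _ pM1) big1 // => B /none /negbTE ->.
have [k [l [nkl EB]]] := crm_pair C1 BM1.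
exists k, l; rewrite -EB; split => //.
by apply/(on_path_leaves_odd nkl euv); rewrite -EB.
Qed.

Lemma crm_partner_uniq S M1 M2 k l1 l2 : crm leaf e S M1 -> crm leaf e S M2 ->
  [set k; l1] \in M1 -> [set k; l2] \in M2 -> k != l1 -> k != l2 -> l1 = l2.
Proof.
move=> C1 C2 B1 B2 nk1 nk2; case: (eqVneq l1 l2) => // n12; exfalso.
have [w [y [wn op2 nop1 op1]]] := leaf_path_branch nk1 nk2 n12.
have [k' [l' [B' op']]] := crm_cover_edge C1 C2 B2 op2.
have not_end m : w != leaf m by apply: contraNneq wn => ->; apply: codom_f.
have [d ndy opd] := on_path_through (not_end k') (not_end l') op'.
have nB : [set k; l1] != [set k'; l'].
  by apply: contra_notN nop1 => /eqP EB; apply: on_path_pair (esym EB) op'.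
case: C1 => _ _ _ disj; apply: (disj _ _ B1 B' nB k l1 k' l' erefl erefl).
by exists [set w; d]; split => //; apply: op1 => //; apply: on_path_adj opd.
Qed.

Lemma crm_uniq S M1 M2 : crm leaf e S M1 -> crm leaf e S M2 -> M1 = M2.
Proof.
suff sub M M' : crm leaf e S M -> crm leaf e S M' -> M \subset M'.
  by move=> C1 C2; apply/eqP; rewrite eqEsubset !sub.
move=> C C'; apply/subsetP => B BM.
have [k [l [nkl EB]]] := crm_pair C BM.
have [B' B'M kB'] : exists2 B', B' \in M' & k \in B'.
  have [pM _ _ _] := C; have [/and3P [/eqP cM' _ _] _ _ _] := C'.
  apply/bigcupP; rewrite -/(cover M') cM'.
  by apply: subsetP (partitionS pM BM) _ _; rewrite EB set21.
have [l' nkl' EB'] := crm_pair_with C' B'M kB'.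
have ll' : l = l' by apply: (crm_partner_uniq C C' _ _ nkl nkl'); rewrite -?EB -?EB'.
by rewrite EB ll' -EB'.
Qed.

(** * Removing the path between the leaves [i] and [j] *)

Section RemovePath.
Variables i j : 'I_n.
Hypothesis nij : i != j.
Local Notation Tij := (remove_path e (leaf i) (leaf j)).
Let Tij_sub : subrel Tij e := @remove_path_sub _ e (leaf i) (leaf j).

Lemma leaf_first_edge m m' d : m != m' -> e (leaf m) d ->
  on_path e (leaf m) (leaf m') [set leaf m; d].
Proof.
move=> nm ed; have [p [pp lp up]] := connect_simple_path (e_conn (leaf m) (leaf m')).
case: p pp lp up => [|d' p] pp lp up.
  by move: lp => /leaf_inj mm'; rewrite mm' eqxx in nm.
have ed' : e (leaf m) d' by case/andP: pp.
rewrite (leaf_neighbor_uniq (codom_f _ _) ed ed').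
by exists (d' :: p); split => //; rewrite /walk_edges /= mem_head.
Qed.

Lemma remove_path_isolated m d : m \in [set i; j] -> ~~ Tij (leaf m) d.
Proof.
rewrite !inE => /orP [] /eqP ->; apply/negP => /remove_pathP [ed nop]; apply: nop.
  exact: leaf_first_edge.
by apply: on_path_sym; apply: leaf_first_edge; rewrite // eq_sym.
Qed.

Lemma crm_Tij_notin S M m : crm leaf Tij S M -> m \in [set i; j] -> m \notin S.
Proof.
move=> C mij; apply/negP => mS.
have [/and3P [/eqP cM _ _] _ conn _] := C.
move: mS; rewrite -cM => /bigcupP [B BM mB].
have [l nml EB] := crm_pair_with C BM mB.
have lB : l \in B by rewrite EB set22.
case/connect_simple_path: (conn _ BM _ _ mB lB) => -[|d p] [pp lp _].
  by move: lp => /leaf_inj ml; rewrite ml eqxx in nml.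
by move: pp => /andP [+ _]; apply/negP/remove_path_isolated.
Qed.

Lemma connect_Tij_off a b E : connect Tij a b -> on_path e a b E ->
  ~ on_path e (leaf i) (leaf j) E.
Proof.
move=> cab op; have [p [pp _ _ Ep]] := on_path_restrict Tij_sub op cab.
by have [c [d [-> /remove_pathP []]]] := path_walk_edges pp Ep.
Qed.

Lemma crm_add_pair S M : crm leaf Tij S M ->
  crm leaf e (S :|: [set i; j]) ([set i; j] |: M).
Proof.
move=> C; have [pM card2 conn disj] := C.
split.
- rewrite [S :|: _]setUC; apply: partitionU1 pM _ _.
    by apply/set0Pn; exists i; apply: set21.
  by rewrite disjoints_subset; apply/subsetP => m mij; rewrite inE (crm_Tij_notin C).
- by move=> B; rewrite !inE => /orP [/eqP -> | /card2 //]; rewrite cards2 nij.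
- move=> B; rewrite !inE => /orP [/eqP _ k l _ _ | BM k l kB lB]; first exact: e_conn.
  exact: (connect_sub (fun x y Txy => connect1 (Tij_sub Txy)) (conn _ BM _ _ kB lB)).
move=> B B'; rewrite !inE => /orP [/eqP -> | BM] /orP [/eqP -> | B'M] nBB'
  k l k' l' EB EB' [E [op op']].
- by rewrite eqxx in nBB'.
- rewrite EB' in B'M; apply: connect_Tij_off (crm_connect C B'M) op' _.
  exact: on_path_pair (esym EB) op.
- rewrite EB in BM; apply: connect_Tij_off (crm_connect C BM) op _.
  exact: on_path_pair (esym EB') op'.
apply: (disj _ _ BM B'M nBB' k l k' l' EB EB'); exists E.
rewrite EB in BM; rewrite EB' in B'M.
by split; apply: on_path_restrict Tij_sub _ _; rewrite // (crm_connect C).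
Qed.

Lemma crm_del_pair S M : crm leaf e S M -> [set i; j] \in M ->
  crm leaf Tij (S :\: [set i; j]) (M :\ [set i; j]).
Proof.
move=> C ijM; have [pM card2 _ disj] := C.
split.
- exact: partitionD1.
- by move=> B /setD1P [_ /card2].
- move=> B /setD1P [nB BM] k l kB lB.
  have [l' _ EB] := crm_pair_with C BM kB.
  move: lB; rewrite EB !inE => /orP [/eqP -> | /eqP ->]; first exact: connect0.
  have [p [pp lp up]] := connect_simple_path (e_conn (leaf k) (leaf l')).
  apply/connectP; exists p => //; apply: (path_remove_path pp) => E Ep opij.
  apply: (disj _ _ BM ijM nB k l' i j EB erefl); exists E; split => //.
  by exists p; split.
move=> B B' /setD1P [_ BM] /setD1P [_ B'M] nBB' k l k' l' EB EB' [E [op op']].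
apply: (disj _ _ BM B'M nBB' k l k' l' EB EB'); exists E.
by split; apply: on_path_subrel Tij_sub _.
Qed.

Lemma crm_Tij_pair_notin S M : crm leaf Tij S M -> [set i; j] \notin M.
Proof.
move=> C; apply/negP => ijM; have [pM _ _ _] := C.
by move: (crm_Tij_notin C (set21 i j)); rewrite (subsetP (partitionS pM ijM)) ?set21.
Qed.

Lemma crm_Tij_uniq S M1 M2 : crm leaf Tij S M1 -> crm leaf Tij S M2 -> M1 = M2.
Proof.
move=> C1 C2; have E := crm_uniq (crm_add_pair C1) (crm_add_pair C2).
by rewrite -(setU1K (crm_Tij_pair_notin C1)) E setU1K // (crm_Tij_pair_notin C2).
Qed.

Lemma crm_with_pairP S :
  (exists M, crm leaf e S M /\ [set i; j] \in M) <->
  [set i; j] \subset S /\ exists M', crm leaf Tij (S :\: [set i; j]) M'.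
Proof.
split=> [[M [C ijM]] | [ijS [M' C']]].
  have [pM _ _ _] := C; split; first exact: partitionS pM ijM.
  by exists (M :\ [set i; j]); apply: crm_del_pair.
exists ([set i; j] |: M'); split; last exact: setU11.
by rewrite -{1}(setDUK ijS); apply: crm_add_pair.
Qed.

Lemma gammaV_crm (R : realFieldType) (alpha : {set 'I_n} -> R) S M B :
  crm leaf Tij S M -> B \in M -> gammaV leaf e i j alpha B = alpha B.
Proof.
move=> C BM; rewrite /gammaV; case: asboolP => // -[k [l [EB [E [opij op]]]]].
by rewrite EB in BM; case: (connect_Tij_off (crm_connect C BM) op).
Qed.

Lemma crm_Tij_disjoint S M : crm leaf Tij S M -> [disjoint S & [set i; j]].
Proof.
move=> C; rewrite disjoint_sym disjoints_subset; apply/subsetP => m mij.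
by rewrite inE (crm_Tij_notin C).
Qed.

Local Open Scope ring_scope.
Variable R : realFieldType.
Variables alpha beta : {set 'I_n} -> R.
Hypothesis alpha_beta :
  forall B : {set 'I_n}, #|B| = 2%N -> B != [set i; j] -> alpha B = beta B.

Lemma alphaF_off_pair S M : crm leaf e S M -> [set i; j] \notin M ->
  alphaF leaf e alpha S = alphaF leaf e beta S.
Proof.
move=> C ijM; have [_ card2 _ _] := C.
rewrite !(alphaF_crm _ (fun M' C' => crm_uniq C' C) C).
apply: eq_bigr => B BM; apply: alpha_beta (card2 _ BM) _.
by apply: contraNneq ijM => <-.
Qed.

Lemma alphaF_with_pair S M : crm leaf e S M -> [set i; j] \in M ->
  alphaF leaf e alpha S - alphaF leaf e beta S =
  (alpha [set i; j] - beta [set i; j]) *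
    alphaF leaf Tij (gammaV leaf e i j alpha) (S :\: [set i; j]).
Proof.
move=> C ijM; have C' := crm_del_pair C ijM; have [_ card2 _ _] := C'.
rewrite !(alphaF_crm _ (fun M' C1 => crm_uniq C1 C) C).
rewrite (alphaF_crm _ (fun M' C1 => crm_Tij_uniq C1 C') C').
rewrite !(big_setD1 _ ijM) /= mulrBl; congr (_ * _ - _ * _).
  by apply: eq_bigr => B BM; rewrite (gammaV_crm _ C' BM).
apply: eq_bigr => B BM; rewrite (gammaV_crm _ C' BM) alpha_beta ?card2 //.
by case/setD1P: BM.
Qed.

Lemma fx_diff (x : 'I_n -> R) :
  fx leaf e x alpha - fx leaf e x beta =
  x i * x j * (alpha [set i; j] - beta [set i; j]) *
    fx leaf Tij x (gammaV leaf e i j alpha).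
Proof.
rewrite /fx -mulrBr -sumrB [RHS]mulrCA; congr (_ * _).
rewrite (bigID (fun S => `[< exists M, crm leaf e S M /\ [set i; j] \in M >])) /=.
rewrite [X in _ + X]big1 ?addr0 => [|S /andP [/andP [_ /asboolP [M C]] nQ]]; last first.
  rewrite (alphaF_off_pair C) ?subrr ?mul0r //.
  by apply: contra nQ => ijM; apply/asboolP; exists M.
rewrite mulr_sumr.
rewrite (reindex_onto (fun S' => S' :|: [set i; j]) (fun S => S :\: [set i; j]))
  => [|S /andP [_ /asboolP /crm_with_pairP [ijS _]]]; last exact: setDUK.
apply: eq_big => S'; last first.
  case/andP => /andP [_ /asboolP /crm_with_pairP [_ [M' C']]] /eqP E'; rewrite E' in C'.
  rewrite -mulrBl (alphaF_with_pair (crm_add_pair C') (setU11 _ _)) E'.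
  have [iS jS] : i \notin S' /\ j \notin S'.
    by split; apply: (crm_Tij_notin C'); rewrite !inE eqxx ?orbT.
  have -> : S' :|: [set i; j] = i |: (j |: S') by rewrite setUC setUA.
  rewrite !big_setU1 ?inE ?negb_or ?nij //=.
  ring.
apply/idP/idP => [/andP [/andP [_ /asboolP /crm_with_pairP [_ [M' C']]] /eqP E']|].
  by rewrite -E' (crm_even C'); apply/asboolP; exists M'.
case/andP => _ /asboolP [M' C']; have C := crm_add_pair C'.
rewrite (crm_even C) setUDK ?(crm_Tij_disjoint C') ?eqxx //= andbT.
by apply/andP; split; apply/asboolP; exists ([set i; j] |: M'); rewrite ?setU11.
Qed.

End RemovePath.
End Tree.

Unset Implicit Arguments.
Local Open Scope ring_scope.

Theorem lemma6 (V : finType) (e : rel V) (n : nat) (leaf : 'I_n -> V)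
  (R : realFieldType) (i j : 'I_n) (alpha beta : {set 'I_n} -> R)
  (x : 'I_n -> R) :
  is_tree e ->
  injective leaf ->
  (forall v : V, (degree e v == 1%N) = (v \in codom leaf)) ->
  (forall v : V, v \notin codom leaf -> degree e v = 3%N) ->
  i != j ->
  (forall B : {set 'I_n}, #|B| = 2%N -> -1 <= alpha B <= 1) ->
  (forall B : {set 'I_n}, #|B| = 2%N -> -1 <= beta B <= 1) ->
  (forall B : {set 'I_n}, #|B| = 2%N -> B != [set i; j] -> alpha B = beta B) ->
  (forall k, x k = 1 \/ x k = -1) ->
  fx leaf e x alpha - fx leaf e x beta =
    x i * x j * (alpha [set i; j] - beta [set i; j]) *
    fx leaf (remove_path e (leaf i) (leaf j)) x (gammaV leaf e i j alpha).
Proof.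
case=> e_sym e_irr e_conn e_acyclic leaf_inj leaf_deg1 inner_deg3 nij _ _ alpha_beta _.
exact: fx_diff.
Qed.
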